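(* Let $G=(V,E)$ be a $k$-uniform cored hypergraph ($k\ge3$) and let $\mathbf x\in\mathbb R^n$ be an H-eigenvector of its Laplacian tensor $\mathcal L$ corresponding to an H-eigenvalue $\lambda\neq1$. If $i,j$ are two cored vertices lying in a common edge $e\in E$, then $|x_i|=|x_j|$; moreover $x_i=x_j$ when $k$ is odd.
   Context: A $k$-uniform hypergraph $G=(V,E)$ has $V=[n]$ and a nonempty set $E$ of $k$-element subsets of $V$; $d_i$ is the number of edges containing $i$. A cored vertex is a vertex of degree one; $G$ is cored if every edge contains a cored vertex. The Laplacian tensor $\mathcal L=\mathcal D-\mathcal A$ ($\mathcal D$ diagonal with entries $d_i$, $\mathcal A$ with entries $\frac1{(k-1)!}$ at index tuples forming an edge and $0$ otherwise) satisfies $(\mathcal L\mathbf x^{k-1})_i=d_ix_i^{k-1}-\sum_{e\in E,\,i\in e}\prod_{s\in e\setminus\{i\}}x_s$. A real $\lambda$ is an H-eigenvalue with H-eigenvector $\mathbf x\neq0$ if $(\mathcal L\mathbf x^{k-1})_i=\lambda x_i^{k-1}$ for all $i$. *)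

From mathcomp Require Import all_boot all_order all_algebra.
From mathcomp Require Import reals.
Set Implicit Arguments. Unset Strict Implicit. Unset Printing Implicit Defensive.
Import Order.TTheory GRing.Theory Num.Theory.
Local Open Scope ring_scope.

Definition uniform_hypergraph (n k : nat) (E : {set {set 'I_n}}) : Prop :=
  E != set0 /\ forall e, e \in E -> #|e| = k.

Definition degree (n : nat) (E : {set {set 'I_n}}) (i : 'I_n) : nat :=
  #|[set e in E | i \in e]|.

Definition cored_vertex (n : nat) (E : {set {set 'I_n}}) (i : 'I_n) : Prop :=
  degree E i = 1%N.

Definition cored (n : nat) (E : {set {set 'I_n}}) : Prop :=
  forall e, e \in E -> exists2 i, i \in e & cored_vertex E i.

(* (L x^{k-1})_i = d_i x_i^{k-1} - sum_{e in E, i in e} prod_{s in e \ {i}} x_s *)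
Definition laplacian_apply (R : nzRingType) (n k : nat) (E : {set {set 'I_n}})
  (x : 'I_n -> R) (i : 'I_n) : R :=
  (degree E i)%:R * x i ^+ k.-1
  - \sum_(e in E | i \in e) \prod_(s in e :\ i) x s.

Definition H_eigenpair (R : nzRingType) (n k : nat) (E : {set {set 'I_n}})
  (lambda : R) (x : 'I_n -> R) : Prop :=
  (exists i, x i != 0) /\
  forall i, laplacian_apply k E x i = lambda * x i ^+ k.-1.

From mathcomp Require Import all_boot all_order all_algebra.
From mathcomp Require Import reals ring.
Set Implicit Arguments. Unset Strict Implicit. Unset Printing Implicit Defensive.
Import Order.TTheory GRing.Theory Num.Theory.
Local Open Scope ring_scope.

(* At a cored vertex i of the edge e the eigen-equation has a single summand,
   d_i x_i^{k-1} - prod_{s in e \ i} x_s = lambda x_i^{k-1} with d_i = 1, and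
   multiplying by x_i gives (1 - lambda) x_i^k = prod_{s in e} x_s.  The right
   side does not depend on i, so for lambda <> 1 all cored vertices of e have
   the same x_i^k: equal moduli, and equal values when k is odd. *)

Lemma cored_edges_at (n : nat) (E : {set {set 'I_n}}) (i : 'I_n) (e : {set 'I_n}) :
  cored_vertex E i -> e \in E -> i \in e -> [set e' in E | i \in e'] = [set e].
Proof.
move=> /eqP/cards1P [f Hf] eE ie.
have : e \in [set e' in E | i \in e'] by rewrite inE eE ie.
by rewrite Hf inE => /eqP ->.
Qed.

Lemma laplacian_apply_cored (R : nzRingType) (n k : nat) (E : {set {set 'I_n}})
  (x : 'I_n -> R) (i : 'I_n) (e : {set 'I_n}) :
  cored_vertex E i -> e \in E -> i \in e ->
  laplacian_apply k E x i = x i ^+ k.-1 - \prod_(s in e :\ i) x s.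
Proof.
move=> ci eE ie; rewrite /laplacian_apply [degree E i]ci mul1r.
rewrite (eq_bigl [in [set e' in E | i \in e']]); last by move=> e'; rewrite inE.
by rewrite (cored_edges_at ci eE ie) big_set1.
Qed.

Lemma cored_eigen_product (R : comNzRingType) (n k : nat) (E : {set {set 'I_n}})
  (lambda : R) (x : 'I_n -> R) (i : 'I_n) (e : {set 'I_n}) :
  (0 < k)%N -> H_eigenpair k E lambda x ->
  cored_vertex E i -> e \in E -> i \in e ->
  (1 - lambda) * x i ^+ k = \prod_(s in e) x s.
Proof.
move=> k_gt0 [_ eig] ci eE ie.
have := eig i; rewrite (laplacian_apply_cored _ _ ci eE ie) => eig_i.
rewrite (bigD1 i) //= (eq_bigl [in e :\ i]); last by move=> s; rewrite !inE andbC.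
have -> : \prod_(s in e :\ i) x s = (1 - lambda) * x i ^+ k.-1.
  by rewrite mulrBl mul1r -eig_i; ring.
by rewrite -{1}(prednK k_gt0) exprS; ring.
Qed.

Lemma eq_norm_of_eqXn (R : numDomainType) (m : nat) (a b : R) :
  (0 < m)%N -> a ^+ m = b ^+ m -> `|a| = `|b|.
Proof.
by move=> m_gt0 eq_ab; apply/eqP; rewrite -(eqrXn2 m_gt0) // -!normrX eq_ab.
Qed.

Lemma eq_of_eqXn_odd (R : realDomainType) (m : nat) (a b : R) :
  odd m -> a ^+ m = b ^+ m -> a = b.
Proof.
move=> m_odd eq_ab.
have sgX_odd (c : R) : Num.sg (c ^+ m) = Num.sg c.
  have [-> | c_neq0] := eqVneq c 0; first by rewrite expr0n gtn_eqF ?odd_gt0 // sgr0.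
  by rewrite sgrX sgr_odd // m_odd expr1.
rewrite [a]numEsg [b]numEsg -sgX_odd eq_ab sgX_odd.
by rewrite (eq_norm_of_eqXn (odd_gt0 m_odd) eq_ab).
Qed.

Theorem lemma3p1 (R : realType) (n k : nat) (E : {set {set 'I_n}})
  (lambda : R) (x : 'I_n -> R) (i j : 'I_n) (e : {set 'I_n}) :
  (3 <= k)%N ->
  uniform_hypergraph k E ->
  cored E ->
  H_eigenpair k E lambda x ->
  lambda != 1 ->
  e \in E -> i \in e -> j \in e ->
  cored_vertex E i -> cored_vertex E j ->
  `|x i| = `|x j| /\ (odd k -> x i = x j).
Proof.
move=> k_ge3 _ _ eig lambda_neq1 eE ie je ci cj.
have k_gt0 : (0 < k)%N by apply: leq_trans k_ge3.
have eq_powers : x i ^+ k = x j ^+ k.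
  apply: (mulfI (_ : 1 - lambda != 0)); first by rewrite subr_eq0 eq_sym.
  by rewrite (cored_eigen_product k_gt0 eig ci eE ie) (cored_eigen_product k_gt0 eig cj eE je).
split; first exact: eq_norm_of_eqXn eq_powers.
by move=> k_odd; exact: eq_of_eqXn_odd eq_powers.
Qed.
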